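(* Let $d\colon A\to B$ be a homomorphism of abelian groups. The ring homomorphism $q\colon Q(d)\to\operatorname{End}(d)$ restricts to an isomorphism of partially ordered sets $\operatorname{Id}_0(d)\xrightarrow{\sim}\operatorname{Prj}(d)$ that respects the action of $\operatorname{Aut}(d)$. Its inverse sends $e=(e_A,e_B)\in\operatorname{Prj}(d)$ to the homomorphism $B=\ker(e_B)\oplus\operatorname{im}(e_B)\to A$ that is zero on $\ker(e_B)$ and on $\operatorname{im}(e_B)$ equals the inverse of the isomorphism $\operatorname{im}(e_A)\to\operatorname{im}(e_B)$ obtained by restricting $d$.
   Context: $\operatorname{End}(d)$ is the ring of pairs $(\alpha,\beta)\in\operatorname{End}(A)\times\operatorname{End}(B)$ with $\beta d=d\alpha$ (componentwise operations); $\operatorname{Aut}(d)$ is its unit group. $Q(d)=\mathbb{Z}\oplus\operatorname{Hom}(B,A)$ is the ring with multiplication $(m,f)\star(n,g)=(mn,\,mg+nf+f\circ d\circ g)$ and unit $(1,0)$; $q\colon Q(d)\to\operatorname{End}(d)$ is the ring homomorphism sending $1$ to the identity and $f\in\operatorname{Hom}(B,A)$ to $(f\circ d,\,d\circ f)$. $\operatorname{Id}_0(d)=\{f\in\operatorname{Hom}(B,A): f d f=f\}$, partially ordered by $f\leq g$ iff $f\star g=g\star f=f$. For an idempotent $e=(e_A,e_B)\in\operatorname{End}(d)$, $\operatorname{im}(e)$ denotes the restriction $\operatorname{im}(e_A)\to\operatorname{im}(e_B)$ of $d$; $\operatorname{Prj}(d)$ is the set of idempotents $e\in\operatorname{End}(d)$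 for which $\operatorname{im}(e)$ is an isomorphism, partially ordered by $e\leq e'$ iff $ee'=e'e=e$. $\operatorname{Aut}(d)$ acts on $\operatorname{Prj}(d)$ by conjugation and on $\operatorname{Id}_0(d)$ by $(\alpha,\beta)\cdot f=\alpha\circ f\circ\beta^{-1}$. *)

(* Abelian groups are zmodTypes; homomorphisms are plain
   functions together with the explicit homomorphism property [is_hom]. *)
From mathcomp Require Import all_boot all_algebra.
Set Implicit Arguments. Unset Strict Implicit. Unset Printing Implicit Defensive.
Import GRing.Theory.
Local Open Scope ring_scope.

Section Defs.
Variables (A B : zmodType) (d : A -> B).

Definition is_hom (U V : zmodType) (f : U -> V) : Prop :=
  forall x y, f (x - y) = f x - f y.

(* elements of End(A) x End(B) are pairs of functions *)
Definition endpair := ((A -> A) * (B -> B))%type.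

Definition in_End (e : endpair) : Prop :=
  [/\ is_hom e.1, is_hom e.2 & forall a, e.2 (d a) = d (e.1 a)].

Definition eqEnd (e e' : endpair) : Prop := e.1 =1 e'.1 /\ e.2 =1 e'.2.
Definition mulEnd (e e' : endpair) : endpair := (e.1 \o e'.1, e.2 \o e'.2).
Definition oneEnd : endpair := (id, id).

Definition inv_in_End (u u' : endpair) : Prop :=
  [/\ in_End u, in_End u', eqEnd (mulEnd u u') oneEnd & eqEnd (mulEnd u' u) oneEnd].
Definition in_Aut (u : endpair) : Prop := exists u', inv_in_End u u'.

Definition Qelt := (int * (B -> A))%type.
Definition in_Q (x : Qelt) : Prop := is_hom x.2.
Definition eqQ (x y : Qelt) : Prop := x.1 = y.1 /\ x.2 =1 y.2.
Definition starQ (x y : Qelt) : Qelt :=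
  (x.1 * y.1, fun b => (y.2 b) *~ x.1 + (x.2 b) *~ y.1 + x.2 (d (y.2 b))).
Definition oneQ : Qelt := (1, fun _ => 0).
Definition inQ (f : B -> A) : Qelt := (0, f).

Definition q (x : Qelt) : endpair :=
  (fun a => a *~ x.1 + x.2 (d a), fun b => b *~ x.1 + d (x.2 b)).

Definition Id0 (f : B -> A) : Prop := is_hom f /\ forall b, f (d (f b)) = f b.
Definition leId (f g : B -> A) : Prop :=
  eqQ (starQ (inQ f) (inQ g)) (inQ f) /\ eqQ (starQ (inQ g) (inQ f)) (inQ f).

Definition in_im (U : Type) (h : U -> U) (u : U) : Prop := exists x, h x = u.

(* im(e) : im(e_A) -> im(e_B), the restriction of d, is an isomorphism
   (it is well defined since e_B d = d e_A); bijectivity is stated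
   directly: injective on im(e_A) and onto im(e_B). *)
Definition im_iso (e : endpair) : Prop :=
  (forall a a', in_im e.1 a -> in_im e.1 a' -> d a = d a' -> a = a') /\
  (forall b, in_im e.2 b -> exists2 a, in_im e.1 a & d a = b).

Definition idempotentE (e : endpair) : Prop := eqEnd (mulEnd e e) e.
Definition Prj (e : endpair) : Prop := [/\ in_End e, idempotentE e & im_iso e].
Definition lePrj (e e' : endpair) : Prop :=
  eqEnd (mulEnd e e') e /\ eqEnd (mulEnd e' e) e.

(* u = (alpha,beta) with inverse u' = (alpha^-1, beta^-1) *)
Definition act_Prj (u u' e : endpair) : endpair := mulEnd (mulEnd u e) u'.
Definition act_Id0 (u u' : endpair) (f : B -> A) : B -> A :=
  u.1 \o f \o u'.2.

End Defs.

(* An element f of Id_0(d) gives the idempotent pair (f d, d f), and the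
   condition f d f = f makes d an isomorphism from im(f d) = im f onto
   im(d f).  Conversely, for e in Prj(d) the inverse of that isomorphism,
   precomposed with e_B, is the unique f with (f d, d f) = e: it satisfies
   d f = e_B by construction, and f d = e_A because d e_A = e_B d and d is
   injective on im(e_A).  In terms of f, the order and the Aut(d)-action on
   both sides are given by the same formulas (f d g = f = g d f, resp.
   alpha f beta^-1), which gives the remaining assertions. *)
From mathcomp Require Import all_boot all_algebra.
From Stdlib Require Import ClassicalEpsilon.
Set Implicit Arguments. Unset Strict Implicit. Unset Printing Implicit Defensive.
Import GRing.Theory.
Local Open Scope ring_scope.

Lemma hom0 (U V : zmodType) (f : U -> V) : is_hom f -> f 0 = 0.
Proof. by move=> hf; rewrite -(subrr 0) hf subrr. Qed.

Lemma hom_comp (U V W : zmodType) (f : V -> W) (g : U -> V) :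
  is_hom f -> is_hom g -> is_hom (f \o g).
Proof. by move=> hf hg x y /=; rewrite hg hf. Qed.

Lemma mulEnd1 (A B : zmodType) (e e' : endpair A B) a :
  (mulEnd e e').1 a = e.1 (e'.1 a).
Proof. by []. Qed.

Lemma mulEnd2 (A B : zmodType) (e e' : endpair A B) b :
  (mulEnd e e').2 b = e.2 (e'.2 b).
Proof. by []. Qed.

Section Idempotents.
Variables (A B : zmodType) (d : A -> B).
Hypothesis hd : is_hom d.

Lemma q_inQ1 (f : B -> A) a : (q d (inQ f)).1 a = f (d a).
Proof. by rewrite /= mulr0z add0r. Qed.

Lemma q_inQ2 (f : B -> A) b : (q d (inQ f)).2 b = d (f b).
Proof. by rewrite /= mulr0z add0r. Qed.

Lemma eqEnd_q_inQ (f : B -> A) (e : endpair A B) :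
  eqEnd (q d (inQ f)) e <->
  (forall a, f (d a) = e.1 a) /\ (forall b, d (f b) = e.2 b).
Proof.
split=> -[E1 E2]; split=> x.
- by rewrite -E1 q_inQ1.
- by rewrite -E2 q_inQ2.
- by rewrite q_inQ1 E1.
- by rewrite q_inQ2 E2.
Qed.

Lemma starQ_inQ (f g : B -> A) :
  eqQ (starQ d (inQ f) (inQ g)) (inQ (f \o d \o g)).
Proof. by split=> [|b] /=; rewrite ?mulr0 // !mulr0z !add0r. Qed.

Lemma leId_comp (f g : B -> A) :
  leId d f g <-> (forall b, f (d (g b)) = f b) /\ (forall b, g (d (f b)) = f b).
Proof.
have [_ Efg] := starQ_inQ f g; have [_ Egf] := starQ_inQ g f.
split=> [[[_ E1] [_ E2]] | [E1 E2]].
  split=> b; first exact: etrans (esym (Efg b)) (E1 b).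
  exact: etrans (esym (Egf b)) (E2 b).
split; split=> [|b]; rewrite /= ?mulr0 //; first exact: etrans (Efg b) (E1 b).
exact: etrans (Egf b) (E2 b).
Qed.

Lemma Prj_q_Id0 (f : B -> A) : Id0 d f -> Prj d (q d (inQ f)).
Proof.
move=> [hf fdf]; split.
- split=> [x y | x y | a]; rewrite !(q_inQ1, q_inQ2) //.
    by rewrite hd hf.
  by rewrite hf hd.
- by split=> x; rewrite (mulEnd1, mulEnd2) !(q_inQ1, q_inQ2) ?fdf.
split=> [a a' [x <-] [x' <-] | b [x <-]]; rewrite !(q_inQ1, q_inQ2).
  by move=> E; rewrite -fdf E fdf.
by exists (f x); first by exists (f x); rewrite q_inQ1 fdf.
Qed.

Lemma Id0_q_inj (f g : B -> A) : Id0 d f -> Id0 d g ->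
  eqEnd (q d (inQ f)) (q d (inQ g)) -> f =1 g.
Proof.
move=> [_ fdf] [_ gdg] [E1 E2] b.
by rewrite -fdf -q_inQ2 E2 q_inQ2 -q_inQ1 E1 q_inQ1 gdg.
Qed.

Definition lifts (e : endpair A B) (f : B -> A) : Prop :=
  forall b, in_im e.1 (f b) /\ d (f b) = e.2 b.

Section Lifts.
Variables (e : endpair A B) (f : B -> A).
Hypotheses (he : Prj d e) (hfe : lifts e f).

Let lift_uniq a a' : in_im e.1 a -> in_im e.1 a' -> d a = d a' -> a = a'.
Proof. by case: he => _ _ [inj _]; apply: inj. Qed.

Lemma lifts_idem b : f (e.2 b) = f b.
Proof.
case: he => _ [_ id2] _; apply: lift_uniq; [exact: (hfe _).1 | exact: (hfe _).1 |].
by rewrite !(hfe _).2; apply: id2.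
Qed.

Lemma lifts_eqEnd : eqEnd (q d (inQ f)) e.
Proof.
case: he => -[_ _ comm] _ _; apply/eqEnd_q_inQ.
split=> [a | b]; last exact: (hfe b).2.
apply: lift_uniq; [exact: (hfe _).1 | by exists a | by rewrite (hfe _).2 comm].
Qed.

Lemma lifts_Id0 : Id0 d f.
Proof.
case: he => -[he1 he2 _] _ _.
split=> [x y | b]; last by rewrite (hfe b).2 lifts_idem.
apply: lift_uniq; first exact: (hfe _).1.
  have [[u <-] _] := hfe x; have [[v <-] _] := hfe y.
  by exists (u - v); rewrite he1.
by rewrite hd !(hfe _).2 he2.
Qed.

End Lifts.

Lemma Prj_lifts (e : endpair A B) : Prj d e -> exists f, lifts e f.
Proof.
move=> [_ _ [_ sur]].
apply: (choice (fun b a => in_im e.1 a /\ d a = e.2 b)) => b.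
by have [|a ha <-] := sur (e.2 b); [exists b | exists a].
Qed.

Lemma q_inQ_lifts (e : endpair A B) (f : B -> A) :
  Id0 d f -> eqEnd (q d (inQ f)) e -> lifts e f.
Proof.
move=> [_ fdf] /eqEnd_q_inQ [E1 E2] b.
by split; [exists (f b); rewrite -E1 fdf | rewrite E2].
Qed.

Lemma lePrj_q_inQ (f g : B -> A) : Id0 d f -> Id0 d g ->
  lePrj (q d (inQ f)) (q d (inQ g)) <-> leId d f g.
Proof.
move=> [_ fdf] [_ gdg]; rewrite leId_comp /lePrj /eqEnd.
split=> [[[_ E2] [E3 _]] | [E1 E2]].
  split=> b /=.
    have := E2 b; rewrite mulEnd2 !q_inQ2 => dfdg.
    by rewrite -fdf dfdg fdf.
  by have := E3 (f b); rewrite mulEnd1 !q_inQ1 !fdf.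
by split; split=> x; rewrite (mulEnd1, mulEnd2) !(q_inQ1, q_inQ2) ?E1 ?E2.
Qed.

Section Action.
Variables (u u' : endpair A B) (f : B -> A).
Hypotheses (hu : inv_in_End d u u') (hf : Id0 d f).

Lemma Id0_act : Id0 d (act_Id0 u u' f).
Proof.
case: hu => [[hu1 _ _] [_ hu2' cu'] _ [uu'K _]]; case: hf => hom_f fdf.
split; first by apply: hom_comp; first apply: hom_comp.
have u'uK a : u'.1 (u.1 a) = a by exact: uu'K.
by move=> b; rewrite /act_Id0 /= cu' u'uK fdf.
Qed.

Lemma q_inQ_act :
  eqEnd (q d (inQ (act_Id0 u u' f))) (act_Prj u u' (q d (inQ f))).
Proof.
case: hu => [[_ _ cu] [_ _ cu'] _ _]; apply/eqEnd_q_inQ.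
by split=> x; rewrite /act_Prj !(mulEnd1, mulEnd2) (q_inQ1, q_inQ2) /act_Id0 /=
  ?cu ?cu'.
Qed.

End Action.

Lemma q_inQ_ker (e : endpair A B) (f : B -> A) :
  Id0 d f -> eqEnd (q d (inQ f)) e -> forall b, e.2 b = 0 -> f b = 0.
Proof.
move=> [hf fdf] /eqEnd_q_inQ [_ E2] b eb0.
by rewrite -fdf E2 eb0 hom0.
Qed.

Lemma q_inQ_im (e : endpair A B) (f : B -> A) :
  Prj d e -> Id0 d f -> eqEnd (q d (inQ f)) e ->
  forall b, in_im e.2 b -> in_im e.1 (f b) /\ d (f b) = b.
Proof.
move=> he hf hfe _ [b <-]; have lf := q_inQ_lifts hf hfe.
by rewrite (lifts_idem he lf); apply: lf.
Qed.

End Idempotents.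

Theorem proposition4p6 (A B : zmodType) (d : A -> B) (hd : is_hom d) :
  (* q restricts to a map Id_0(d) -> Prj(d) *)
  (forall f, Id0 d f -> Prj d (q d (inQ f))) /\
  (* injective *)
  (forall f g, Id0 d f -> Id0 d g ->
     eqEnd (q d (inQ f)) (q d (inQ g)) -> f =1 g) /\
  (* surjective *)
  (forall e, Prj d e -> exists2 f, Id0 d f & eqEnd (q d (inQ f)) e) /\
  (* order isomorphism *)
  (forall f g, Id0 d f -> Id0 d g ->
     (leId d f g <-> lePrj (q d (inQ f)) (q d (inQ g)))) /\
  (* equivariance for the action of Aut(d) *)
  (forall u u' f, inv_in_End d u u' -> Id0 d f ->
     Id0 d (act_Id0 u u' f) /\
     eqEnd (q d (inQ (act_Id0 u u' f))) (act_Prj u u' (q d (inQ f)))) /\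
  (* description of the inverse *)
  (forall e f, Prj d e -> Id0 d f -> eqEnd (q d (inQ f)) e ->
     (forall b, e.2 b = 0 -> f b = 0) /\
     (forall b, in_im e.2 b -> in_im e.1 (f b) /\ d (f b) = b)).
Proof.
split; first exact: Prj_q_Id0.
split; first exact: Id0_q_inj.
split.
  move=> e he; have [f hfe] := Prj_lifts he.
  by exists f; [exact: (lifts_Id0 hd he hfe) | exact: (lifts_eqEnd he hfe)].
split; first by move=> f g hf hg; apply: iff_sym (lePrj_q_inQ hf hg).
split; first by move=> u u' f hu hf; split; [exact: Id0_act | exact: q_inQ_act].
by move=> e f he hf hfe; split; [exact: q_inQ_ker hfe | exact: q_inQ_im].
Qed.
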